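(* Let $g\colon[0,1]\to[0,1]$ be a surjection whose graph $\Gamma=\{(x,g(x))\colon x\in[0,1]\}\subseteq[0,1]^2$ (with the subspace topology of the plane) is connected. Define $f\colon\Gamma\to[0,1]$ by $f(x,g(x))=g(x)$. Then $f$ is a continuous quotient surjection of $\Gamma$ onto $[0,1]$.
   Context: A surjection $f\colon X\to Y$ is a quotient map if for every $G\subseteq Y$, $G$ is open in $Y$ iff $f^{-1}(G)$ is open in $X$. *)

From HB Require Import structures.
From mathcomp Require Import all_boot all_order all_algebra.
From mathcomp Require Import all_classical all_reals all_analysis.
Set Implicit Arguments. Unset Strict Implicit. Unset Printing Implicit Defensive.
Import Order.TTheory GRing.Theory Num.Theory.
Import numFieldNormedType.Exports.
Local Open Scope classical_set_scope.
Local Open Scope ring_scope.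

Definition open_in {X : topologicalType} (A G : set X) : Prop :=
  exists U : set X, open U /\ G = A `&` U.

Definition quotient_map_on {X Y : topologicalType} (A : set X) (B : set Y)
  (f : X -> Y) : Prop :=
  f @` A = B /\
  forall G : set Y, G `<=` B -> (open_in B G <-> open_in A (A `&` f @^-1` G)).

Definition graph01 {R : realType} (g : R -> R) : set (R * R) :=
  [set p | p.1 \in `[0, 1] /\ p.2 = g p.1].

From HB Require Import structures.
From mathcomp Require Import all_boot all_order all_algebra.
From mathcomp Require Import all_classical all_reals all_analysis lra.
Import Order.TTheory GRing.Theory Num.Theory.
Import numFieldNormedType.Exports.
Local Open Scope classical_set_scope.
Local Open Scope ring_scope.

(* For the
   quotient property, let G in [0, 1] have an open preimage in the graph and
   suppose some y in G is not interior to G, so that points c outside G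
   accumulate at y from one side. Connectedness of the graph yields two facts:
   g has the intermediate value property, and some z with g z = y is a limit of
   points x with g x on that same side of y (otherwise the part of the graph off
   that side of y would be clopen). An open square around (z, y) inside the
   preimage then contains such an (x, g x), and the intermediate value property
   between x and z produces a point (w, c) of the square with c outside G. *)

Definition locally_constant_on {T : topologicalType} (E A : set T) : Prop :=
  forall p, E p -> \forall q \near p, E q -> (A q <-> A p).

Lemma connected_locally_constant (T : topologicalType) (E A : set T) :
  connected E -> locally_constant_on E A -> (exists2 p, E p & A p) -> E `<=` A.
Proof.
move=> cE loc [p0 Ep0 Ap0].
have EA : E `&` A = E.
  apply: cE; first by exists p0.
  - exists (interior [set q | E q -> A q]); first exact: open_interior.
    apply/seteqP; split=> p /=.
    + by move=> [Ep Ap]; split=> //; apply: filterS (loc p Ep) => q h /h ->.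
    + by move=> [Ep /nbhs_singleton h]; split=> //; exact: h.
  - exists (~` interior [set q | E q -> ~ A q]).
      by rewrite closedC; exact: open_interior.
    apply/seteqP; split=> p /=.
    + by move=> [Ep Ap]; split=> // /nbhs_singleton h; exact: h Ep Ap.
    + move=> [Ep nI]; split=> //; apply: contrapT => nAp; apply: nI.
      by apply: filterS (loc p Ep) => q h /h ->.
by move=> p Ep; have [] : (E `&` A) p by rewrite EA.
Qed.

Lemma near_fst {R : realType} (p : R * R) {P : R -> Prop} :
  (\forall u \near p.1, P u) -> \forall q \near p, P q.1.
Proof. exact: (@cvg_fst _ _ (nbhs p.1) (nbhs p.2) _ P). Qed.

Lemma near_snd {R : realType} (p : R * R) {P : R -> Prop} :
  (\forall v \near p.2, P v) -> \forall q \near p, P q.2.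
Proof. exact: (@cvg_snd _ _ (nbhs p.1) (nbhs p.2) _ P). Qed.

Lemma nbhs_square {R : realType} {p : R * R} {U : set (R * R)} : nbhs p U ->
  exists2 d : R, 0 < d &
    forall q : R * R, `|q.1 - p.1| < d -> `|q.2 - p.2| < d -> U q.
Proof.
move=> /nbhs_ballP [d d0 H]; exists d => // q h1 h2; apply: H.
by split=> /=; rewrite /ball /= distrC.
Qed.

Lemma open_in_preimage {X Y : topologicalType} (A : set X) (B : set Y)
    (f : X -> Y) (G : set Y) :
  continuous f -> f @` A `<=` B -> open_in B G -> open_in A (A `&` f @^-1` G).
Proof.
move=> f_cont fAB [U [oU ->]]; exists (f @^-1` U); split.
  exact: open_comp.
apply/seteqP; split=> [p [Ap [_ Ufp]] | p [Ap Ufp]] //.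
by split=> //; split=> //; apply: fAB; exists p.
Qed.

Section Sides.
Context {R : realType}.
Implicit Types (b : bool) (u v c y : R).

(* The boolean selects a side, so both one-sided cases are handled at once. *)
Definition lt_side b u v := if b then u < v else v < u.

Lemma lt_sideN b u v : lt_side (~~ b) u v = lt_side b v u.
Proof. by case: b. Qed.

Lemma lt_side_asym {b u v} : lt_side b u v -> ~ lt_side b v u.
Proof. by case: b => /= h1 h2; lra. Qed.

Lemma lt_side_neq {b u v} : lt_side b u v -> u <> v.
Proof. by case: b => /= h1 h2; lra. Qed.

Lemma lt_side_total b {u v} : u <> v -> lt_side b u v \/ lt_side b v u.
Proof. by move=> /eqP; rewrite neq_lt; case: b => /= /orP[]; auto. Qed.

Lemma near_lt_side b {v c} : v <> c ->
  \forall u \near v, lt_side b u c <-> lt_side b v c.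
Proof.
move=> vc; case: (lt_side_total b vc) => side.
- by apply: filterS (_ : \forall u \near v, lt_side b u c) => [u ->//|];
    case: b side => /=; [exact: lt_nbhsl | exact: lt_nbhsr].
- have near_c : \forall u \near v, lt_side b c u.
    by case: b side => /=; [exact: lt_nbhsr | exact: lt_nbhsl].
  by apply: filterS near_c => u cu; split=> /lt_side_asym.
Qed.

Lemma approach_from_one_side (P : R -> Prop) y :
  (forall e, 0 < e -> exists c, [/\ `|c - y| < e, c <> y & P c]) ->
  exists b, forall e, 0 < e -> exists c, [/\ `|c - y| < e, lt_side b c y & P c].
Proof.
move=> near_y; have [below|] := pselect (forall e, 0 < e ->
    exists c, [/\ `|c - y| < e, lt_side true c y & P c]).
  by exists true.
move=> /existsNP[e0 /not_implyP[e0_gt0 no_below]].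
exists false => e e_gt0.
have [c [ce cy Pc]] :=
  near_y (Order.min e e0) (ltac:(by rewrite lt_min e_gt0 e0_gt0)).
move: ce; rewrite lt_min => /andP[ce ce0].
case: (lt_side_total true cy) => side; last by exists c.
by case: no_below; exists c.
Qed.

Lemma lt_side_closer {b u c y} : lt_side b u y -> lt_side b c y ->
  `|c - y| < `|u - y| -> lt_side b u c.
Proof.
case: b => /= uy cy; first by rewrite !ltr0_norm ?subr_lt0 //; lra.
by rewrite !gtr0_norm ?subr_gt0 //; lra.
Qed.

Lemma not_nbhs_dist (P : R -> Prop) y : ~ nbhs y P ->
  forall e, 0 < e -> exists c, `|c - y| < e /\ ~ P c.
Proof.
move=> nP e e0; apply: contrapT => all_P; apply: nP; apply/nbhs_ballP.
exists e => // c; rewrite /ball /= distrC => ce.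
by apply: contrapT => nPc; apply: all_P; exists c.
Qed.

End Sides.

Lemma graph01_snd_image {R : realType} (g : R -> R) :
  (fun p : R * R => p.2) @` graph01 g = g @` `[0, 1]%classic.
Proof.
apply/seteqP; split=> [_ [p [p01 ->] <-] | _ [x x01 <-]].
  by exists p.1.
by exists (x, g x).
Qed.

Section ConnectedGraph.
Variables (R : realType) (g : R -> R).
Hypothesis graph_connected : connected (graph01 g).
Local Notation unit_interval := (`[0, 1]%classic : set R).

Lemma connected_graph_ivt b a a' c : 0 <= a -> a < a' -> a' <= 1 ->
  lt_side b (g a) c -> lt_side b c (g a') -> exists2 w, a < w < a' & g w = c.
Proof.
move=> a0 aa' a'1 gac cga'; apply: contrapT => no_root.
(* Without a root in ]a, a'[, [A] is clopen in the graph and separates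
   (a, g a) from (a', g a'). *)
pose A (p : R * R) := p.1 < a \/ (p.1 <= a' /\ lt_side b p.2 c).
suff /(_ (a', g a')) [] : graph01 g `<=` A.
- by split=> //=; rewrite in_itv /=; apply/andP; split; lra.
- by move=> /=; lra.
- by case=> _ /lt_side_asym; apply.
apply: connected_locally_constant => //; last first.
  exists (a, g a); last by right; split=> //=; exact: ltW.
  by split=> //=; rewrite in_itv /=; apply/andP; split; lra.
move=> [x _] [/= x01 ->].
have [xa|ax] := ltP x a.
  apply: filterS (near_fst (x, g x) (lt_nbhsl xa)) => q /= qa _.
  by split=> _; left.
have [a'x|xa'] := ltP a' x.
  apply: filterS (near_fst (x, g x) (lt_nbhsr a'x)) => q /= a'q _.
  by rewrite /A /=; split=> -[|[]]; lra.
have gxc : g x <> c.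
  move=> gxc; have [x_a|nxa] := eqVneq x a.
    by move: gac; rewrite -x_a gxc => /lt_side_neq.
  have [x_a'|nxa'] := eqVneq x a'.
    by move: cga'; rewrite -x_a' gxc => /lt_side_neq.
  by apply: no_root; exists x; rewrite // lt_def nxa ax /= lt_neqAle nxa' xa'.
have near_side := near_snd (x, g x) (near_lt_side b gxc).
have [side|nside] := pselect (lt_side b (g x) c).
- have {}xa' : x < a'.
    rewrite lt_neqAle xa' andbT; apply/eqP => x_a'.
    by move: cga'; rewrite -x_a'; exact: lt_side_asym.
  apply: filterS (filterI near_side (near_fst (x, g x) (lt_nbhsl xa'))).
  move=> q /= [/iffRL qs qa'] _; move: (qs side) => sq.
  by split=> _; right; split=> //; exact: ltW.
- have {}ax : a < x.
    by rewrite lt_neqAle ax andbT; apply/eqP => a_x; move: gac; rewrite a_x.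
  apply: filterS (filterI near_side (near_fst (x, g x) (lt_nbhsr ax))).
  move=> q /= [/iffLR qs aq] _; rewrite /A /=.
  by split=> -[|[_ sq]]; [lra | case: nside; exact: qs | lra | done].
Qed.

Lemma connected_graph_ivt_closer {b x z c} :
  x \in `[0, 1] -> z \in `[0, 1] ->
  lt_side b (g x) c -> lt_side b c (g z) ->
  exists w, [/\ w \in `[0, 1], `|w - z| < `|x - z| & g w = c].
Proof.
rewrite !in_itv /= => /andP[x0 x1] /andP[z0 z1] gxc cgz.
have [xz|zx|xz] := ltgtP x z.
- have [w /andP[xw wz] gw] := connected_graph_ivt b x z c x0 xz z1 gxc cgz.
  exists w; split=> //; first by rewrite in_itv /=; apply/andP; split; lra.
  by rewrite !ltr0_norm ?subr_lt0 //; lra.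
- rewrite -lt_sideN in gxc; rewrite -lt_sideN in cgz.
  have [w /andP[zw wx] gw] :=
    connected_graph_ivt (~~ b) z x c z0 zx x1 cgz gxc.
  exists w; split=> //; first by rewrite in_itv /=; apply/andP; split; lra.
  by rewrite !gtr0_norm ?subr_gt0 //; lra.
- by move: gxc; rewrite xz => /lt_side_asym.
Qed.

Lemma connected_graph_cluster_side b {y x0 x1} :
  x0 \in `[0, 1] -> g x0 = y -> x1 \in `[0, 1] -> lt_side b (g x1) y ->
  exists z, [/\ z \in `[0, 1], g z = y & forall e, 0 < e ->
    exists x, [/\ x \in `[0, 1], `|x - z| < e & lt_side b (g x) y]].
Proof.
move=> x0_01 gx0 x1_01 gx1; apply: contrapT => no_cluster.
(* Otherwise [A] is clopen in the graph: near the points (x, y) by [far]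
   below, elsewhere by continuity of the second projection. *)
pose A (p : R * R) := ~ lt_side b p.2 y.
suff /(_ (x1, g x1)) : graph01 g `<=` A by apply.
apply: connected_locally_constant => //; last first.
  by exists (x0, y); [split; rewrite //= gx0 | move=> /lt_side_neq].
move=> [x _] [/= x01 ->].
have [gxy|gxy] := pselect (g x = y); last first.
  apply: filterS (near_snd (x, g x) (near_lt_side b gxy)) => q /= qs _.
  by rewrite /A /=; split=> nside side; apply: nside; apply/qs.
have [e e0 far] : exists2 e, 0 < e & forall x', x' \in `[0, 1] ->
    `|x' - x| < e -> ~ lt_side b (g x') y.
  apply: contrapT => near_x; apply: no_cluster; exists x; split=> // e e0.
  apply: contrapT => no_x; apply: near_x; exists e => // x' x'01 x'x side.
  by apply: no_x; exists x'.
have near_x : \forall u \near x, `|u - x| < e.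
  exact: (@cvgr_distC_lt _ _ _ (nbhs x) _ id).
apply: filterS (near_fst (x, g x) near_x) => q /= qx [q01 qg].
by rewrite /A /= qg gxy; split=> _; [move=> /lt_side_neq | exact: far].
Qed.

Lemma open_in_of_graph_preimage (G : set R) :
  g @` unit_interval = unit_interval -> G `<=` unit_interval ->
  open_in (graph01 g) (graph01 g `&` (fun p : R * R => p.2) @^-1` G) ->
  open_in unit_interval G.
Proof.
move=> g_onto G01 [U [oU GU]].
have onto y : y \in `[0, 1] -> exists2 x, x \in `[0, 1] & g x = y.
  move=> y01; have [x x01 gxy] : (g @` unit_interval) y by rewrite g_onto.
  by exists x.
exists (interior [set c | unit_interval c -> G c]); split.
  exact: open_interior.
apply/seteqP; split=> [y Gy|y [y01 /nbhs_singleton]]; last by apply.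
split; first exact: G01.
apply: contrapT => /not_nbhs_dist outside.
have [b side] : exists b, forall e, 0 < e ->
    exists c, [/\ `|c - y| < e, lt_side b c y & c \in `[0, 1] /\ ~ G c].
  apply: approach_from_one_side => e e0.
  have [c [ce /not_implyP[c01 nGc]]] := outside e e0.
  by exists c; split=> // cy; apply: nGc; rewrite cy.
have [c1 [_ c1y [c1_01 _]]] := side 1 ltr01.
have [x1 x1_01 gx1] := onto c1 c1_01.
have [x0 x0_01 gx0] := onto y (G01 _ Gy).
have [z [z01 gz cluster]] :=
  connected_graph_cluster_side b x0_01 gx0 x1_01 (ltac:(by rewrite gx1)).
have [_ Uzy] : (graph01 g `&` U) (z, y).
  by rewrite -GU; do !split; rewrite /= ?gz.
have [d d0 box] := nbhs_square (open_nbhs_nbhs (conj oU Uzy)).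
have [x [x01 xz gxy]] := cluster d d0.
have gxy_gt0 : 0 < `|g x - y|.
  by rewrite normr_gt0 subr_eq0; exact/eqP/(lt_side_neq gxy).
have [c [cy cside [c01 nGc]]] :=
  side (Order.min d `|g x - y|) (ltac:(by rewrite lt_min d0 gxy_gt0)).
move: cy; rewrite lt_min => /andP[cyd cyx].
have [w [w01 wz gw]] := connected_graph_ivt_closer x01 z01
  (lt_side_closer gxy cside cyx) (ltac:(by rewrite gz)).
have [_ /= Gc] : (graph01 g `&` (fun p => p.2) @^-1` G) (w, c).
  by rewrite GU; split; [split | apply: box]; rewrite //= ?gw //; lra.
exact: nGc Gc.
Qed.

End ConnectedGraph.

Theorem mainTheorem7 (R : realType) (g : R -> R) :
  g @` `[0, 1]%classic = `[0, 1]%classic ->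
  connected (graph01 g) ->
  {within graph01 g, continuous (fun p : R * R => p.2)} /\
  quotient_map_on (graph01 g) (`[0, 1]%classic : set R) (fun p : R * R => p.2).
Proof.
move=> g_onto g_connected.
have snd_cont : continuous (fun p : R * R => p.2) by move=> p; exact: cvg_snd.
have snd_image := graph01_snd_image g; rewrite g_onto in snd_image.
split; first exact: continuous_subspaceT.
split=> // G G01; split.
- by apply: open_in_preimage => //; rewrite snd_image.
- exact: open_in_of_graph_preimage.
Qed.
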